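(* Let $T$ be an iso-unique zero forcing tree and let $\mathcal{P}$ be a minimum path cover of $T$. If $e=xy$ is a connector edge of $\mathcal{P}$, then either both $x$ and $y$ are interior connector vertices, or one of them is interior and the other is the only vertex of a path from $\mathcal{P}$.
   Context: Zero forcing: in a graph $G$, starting with an initial set $S\subseteq V(G)$ of active vertices, repeatedly apply the rule: if an active vertex $u$ has exactly one non-active neighbor $v$, then $v$ becomes active. $S$ is a zero forcing set if eventually all vertices become active; a minimum zero forcing set is one of minimum size. A graph is an iso-unique zero forcing graph if for every two minimum zero forcing sets $A,B$ there is an automorphism $\phi$ with $\phi(A)=B$. A path cover of a tree $T$ is a set of vertex-disjoint paths of $T$ (a single vertex counts as a path) covering all vertices of $T$; it is minimum if no path cover has fewer paths. For a path cover $\mathcal{P}$, an edge $xy$ with $x,y$ in different paths of $\mathcal{P}$ is a connector edge and $x,y$ are connector vertices; a connector vertex is interior if it is an interior (non-end) vertex of its path in $\mathcal{P}$. *)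

From mathcomp Require Import all_boot all_fingroup.
Set Implicit Arguments. Unset Strict Implicit. Unset Printing Implicit Defensive.

Section Graphs.
Variables (V : finType) (g : rel V).

Definition simple_graph : Prop := symmetric g /\ irreflexive g.

Definition connected_graph : Prop := forall x y : V, connect g x y.

Definition has_cycle : Prop :=
  exists (x : V) (p : seq V),
    [/\ 2 <= size p, uniq (x :: p), path g x p & g (last x p) x].

Definition is_tree : Prop := [/\ simple_graph, connected_graph & ~ has_cycle].

Definition nbhd (u : V) : {set V} := [set v | g u v].

Definition zf_step (S : {set V}) : {set V} :=
  S :|: [set v | [exists u in S, (g u v) && (nbhd u :\: S == [set v])]].

(* the set of eventually active vertices (the rule can add at most #|V|
   vertices, so #|V| rounds suffice to reach the fixpoint) *)
Definition zf_closure (S : {set V}) : {set V} := iter #|V| zf_step S.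

Definition zero_forcing_set (S : {set V}) : Prop := zf_closure S = setT.

Definition min_zero_forcing_set (S : {set V}) : Prop :=
  zero_forcing_set S /\ forall S' : {set V}, zero_forcing_set S' -> #|S| <= #|S'|.

Definition automorphism (phi : {perm V}) : Prop :=
  forall x y : V, g (phi x) (phi y) = g x y.

Definition iso_unique_zf : Prop :=
  forall A B : {set V}, min_zero_forcing_set A -> min_zero_forcing_set B ->
    exists phi : {perm V}, automorphism phi /\ phi @: A = B.

Definition graph_path (p : seq V) : bool :=
  match p with
  | [::] => false
  | x :: q => path g x q && uniq p
  end.

Definition path_cover (P : seq (seq V)) : Prop :=
  all graph_path P /\ perm_eq (flatten P) (enum V).

Definition min_path_cover (P : seq (seq V)) : Prop :=
  path_cover P /\ forall Q, path_cover Q -> size P <= size Q.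

Definition same_path (P : seq (seq V)) (x y : V) : bool :=
  has (fun p => (x \in p) && (y \in p)) P.

Definition connector_edge (P : seq (seq V)) (x y : V) : bool :=
  g x y && ~~ same_path P x y.

Definition interior_vertex (P : seq (seq V)) (x : V) : bool :=
  has (fun p => [&& x \in p, x != head x p & x != last x p]) P.

Definition singleton_path (P : seq (seq V)) (x : V) : bool := [:: x] \in P.

End Graphs.

From mathcomp Require Import all_boot all_fingroup.
Set Implicit Arguments. Unset Strict Implicit. Unset Printing Implicit Defensive.

(* In a forest the first vertices of the paths of any path cover form a zero forcing
   set, and the forcing chains of a zero forcing set form a path cover of the same
   size; so the heads of a minimum path cover form a minimum zero forcing set.
   Reversing one path of a minimum path cover gives another one whose heads differ
   only in that path; since an automorphism maps one head set onto the other and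
   preserves the number of non-leaves, the two ends of every path are both leaves or
   both non-leaves.  Ends of distinct paths are never adjacent (the paths could be
   merged), and if an end [u] of a path is adjacent to an interior vertex [w] of
   another path [s], cutting [s] at [w] and attaching its first part to [u] yields a
   minimum path cover with a path from the head of [s] to the far end of [u]'s path.
   Hence every vertex on a path with non-leaf ends has two neighbours on such paths,
   which a finite forest forbids unless there are none: all ends are leaves.  An end
   of a path with at least two vertices that lies on a connector edge would have a
   neighbour on its path and one off it, and two adjacent ends are excluded. *)

Section Sequences.
Variable T : eqType.
Implicit Types (s r : seq T) (Q : seq (seq T)).

Lemma index_adjacent s s1 s2 a b : uniq s -> s = s1 ++ a :: b :: s2 ->
  index b s = (index a s).+1.
Proof.
move=> Us Es; move: Us; rewrite Es cat_uniq /= => /and3P [_ Ns1 /andP [Na _]].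
have [a1 b1] : a \notin s1 /\ b \notin s1.
  by split; apply: contra Ns1 => ->; rewrite ?orbT.
have ab : a != b by apply: contra Na => /eqP ->; exact: mem_head.
by rewrite !index_cat (negbTE a1) (negbTE b1) /= !eqxx (negbTE ab) addn0 addn1.
Qed.

Lemma split_exit (p : pred T) x r : p x -> ~~ all p r ->
  exists r1 b a r2, [/\ x :: r = r1 ++ b :: a :: r2, p b & ~~ p a].
Proof.
elim: r x => [|y r IH] x //= px; case py: (p y) => /= Hr.
  by have [r1 [b [a [r2 [-> ? ?]]]]] := IH y py Hr; exists (x :: r1), b, a, r2.
by exists [::], x, y, r; rewrite py.
Qed.

Lemma split_prev s x : x \in s -> x != head x s -> exists s1 a s2, s = s1 ++ a :: x :: s2.
Proof.
case/splitPr=> s1 s2; case/lastP: s1 => [|s1 a]; first by rewrite eqxx.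
by exists s1, a, s2; rewrite cat_rcons.
Qed.

Lemma split_interior s x : x \in s -> x != head x s -> x != last x s ->
  exists s1 a b s2, s = s1 ++ [:: a, x, b & s2].
Proof.
move=> xs /(split_prev xs) [s1 [a [[|b s2] ->]]]; first by rewrite last_cat eqxx.
by exists s1, a, b, s2.
Qed.

Lemma perm_to_rem2 (s : seq T) x y : x \in s -> y \in s -> x != y ->
  perm_eq s (x :: y :: rem y (rem x s)).
Proof.
move=> xs ys xy; apply: perm_trans (perm_to_rem xs) _; rewrite perm_cons.
by apply: perm_to_rem; rewrite rem_mem // eq_sym.
Qed.

Lemma sorted_rcons2 (e : rel T) s x y :
  sorted e (rcons (rcons s x) y) = sorted e (rcons s x) && e x y.
Proof. by rewrite -cats1 cat_rcons sorted_cat_cons /= andbT. Qed.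

Lemma sorted_rev_sym (e : rel T) s : symmetric e -> sorted e (rev s) = sorted e s.
Proof. by move=> esym; rewrite rev_sorted; apply: eq_sorted => x y; exact: esym. Qed.

Lemma uniq_flatten_mem Q r : uniq (flatten Q) -> r \in Q -> uniq r.
Proof.
elim: Q => [|p Q IH] //=; rewrite cat_uniq inE => /and3P [Up _ UQ] /orP [/eqP ->|] //.
exact: IH.
Qed.

Lemma uniq_flatten_eq Q r s v : uniq (flatten Q) -> r \in Q -> s \in Q ->
  v \in r -> v \in s -> r = s.
Proof.
elim: Q => [|p Q IH] //=; rewrite cat_uniq => /and3P [_ Dp UQ].
have Np q : q \in Q -> v \in q -> v \in p -> False.
  by move=> qQ vq vp; case/hasP: Dp; exists v => //; apply/flattenP; exists q.
rewrite !inE => /orP [/eqP ->|rQ] /orP [/eqP ->|sQ] vr vs //.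
- by case: (Np s sQ vs vr).
- by case: (Np r rQ vr vs).
- exact: IH.
Qed.

Definition traversal r s := s = r \/ s = rev r.

Definition path_end r u := (u \in r) && ((u == head u r) || (u == last u r)).

Lemma traversal_perm r s : traversal r s -> perm_eq s r.
Proof. by case=> ->; rewrite ?perm_rev. Qed.

Lemma traversal_sorted (e : rel T) r s :
  symmetric e -> sorted e r -> traversal r s -> sorted e s.
Proof. by move=> esym er [->|->]; rewrite ?sorted_rev_sym. Qed.

Lemma path_end_traversal r u : path_end r u -> exists t, traversal r (u :: t).
Proof.
case: r => [|x t] // /andP [_ /orP [/eqP ->|/eqP Eu]]; first by exists t; left.
case/lastP: t Eu => [|t z] /= ->; first by exists [::]; left.
by exists (rev (x :: t)); right; rewrite last_rcons -rcons_cons rev_rcons.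
Qed.

End Sequences.

Section PathCovers.
Variables (V : finType) (g : rel V).
Implicit Types (Q : seq (seq V)) (r s : seq V).

Lemma graph_pathE r : graph_path g r = [&& r != [::], sorted g r & uniq r].
Proof. by case: r. Qed.

Lemma path_cover_uniq Q : path_cover g Q -> uniq (flatten Q).
Proof. by case=> _ /perm_uniq ->; exact: enum_uniq. Qed.

Lemma path_cover_mem Q v : path_cover g Q -> exists2 r, r \in Q & v \in r.
Proof. by case=> _ /perm_mem Qv; apply/flattenP; rewrite Qv mem_enum. Qed.

Lemma path_cover_path Q r : path_cover g Q -> r \in Q -> graph_path g r.
Proof. by case=> /allP QP _ /QP. Qed.

Lemma path_cover_neq0 Q r : path_cover g Q -> r \in Q -> r != [::].
Proof. by move=> C /(path_cover_path C); rewrite graph_pathE => /andP []. Qed.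

Lemma path_cover_sorted Q r : path_cover g Q -> r \in Q -> sorted g r.
Proof. by move=> C /(path_cover_path C); rewrite graph_pathE => /and3P []. Qed.

Lemma path_cover_neq0_sorted Q r : path_cover g Q -> r \in Q -> (r != [::]) && sorted g r.
Proof. by move=> C rQ; rewrite (path_cover_neq0 C rQ) (path_cover_sorted C rQ). Qed.

Lemma path_cover_rearrange Q Q' : path_cover g Q ->
  (forall r, r \in Q' -> (r != [::]) && sorted g r) ->
  perm_eq (flatten Q') (flatten Q) -> path_cover g Q'.
Proof.
move=> [_ QV] Q'path Q'Q; have Q'V := perm_trans Q'Q QV; split=> //.
have U' : uniq (flatten Q') by rewrite (perm_uniq Q'V) enum_uniq.
apply/allP => r rQ'; rewrite graph_pathE (uniq_flatten_mem U' rQ') andbT.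
exact: Q'path.
Qed.

Lemma path_cover_perm Q Q' : perm_eq Q Q' -> path_cover g Q -> path_cover g Q'.
Proof.
move=> QQ' [Qpath QV]; split; first by rewrite -(perm_all _ QQ').
by apply: perm_trans QV; apply: perm_flatten; rewrite perm_sym.
Qed.

Definition heads Q : {set V} := [set v in pmap ohead Q].

Lemma heads_cons x t Q : heads ((x :: t) :: Q) = x |: heads Q.
Proof. by apply/setP => v; rewrite !inE. Qed.

Lemma mem_heads Q x t : (x :: t) \in Q -> x \in heads Q.
Proof. by move=> xtQ; rewrite inE mem_pmap; exact: (map_f ohead xtQ). Qed.

Lemma mem_heads_flatten Q v : v \in heads Q -> v \in flatten Q.
Proof.
rewrite inE mem_pmap => /mapP [[|x t] xtQ //= [->]].
by apply/flattenP; exists (x :: t); rewrite ?mem_head.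
Qed.

Lemma card_heads Q : path_cover g Q -> #|heads Q| = size Q.
Proof.
move=> C; have Qn0 := path_cover_neq0 C.
have sub : subseq (pmap ohead Q) (flatten Q).
  elim: Q Qn0 {C} => [|[|x t] Q IH] Qn0 //=; first by case/eqP: (Qn0 _ (mem_head _ _)).
  rewrite eqxx; apply: subseq_trans (IH _) (suffix_subseq _ _) => r rQ.
  by apply: Qn0; rewrite inE rQ orbT.
rewrite cardsE (card_uniqP _); last exact: subseq_uniq sub (path_cover_uniq C).
rewrite size_pmap -(count_predT Q); apply: eq_in_count => r /Qn0.
by case: r.
Qed.

Definition path_succ Q a b :=
  exists2 r, r \in Q & exists r1 r2, r = r1 ++ a :: b :: r2.

Lemma path_succ_edge Q a b : path_cover g Q -> path_succ Q a b -> g a b.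
Proof.
move=> C [r /(path_cover_sorted C) + [r1 [r2 Er]]]; rewrite Er => /cat_sorted2 [_].
by case/andP.
Qed.

Lemma path_succ_index Q a b r : path_cover g Q -> path_succ Q a b -> r \in Q ->
  a \in r \/ b \in r -> [/\ a \in r, b \in r & index b r = (index a r).+1].
Proof.
move=> C [r' r'Q [r1 [r2 Er']]] rQ abr; have U := path_cover_uniq C.
have [ar' br'] : a \in r' /\ b \in r' by rewrite Er' !(mem_cat, inE) !eqxx !orbT.
have -> : r = r'.
  by case: abr => [ar|br]; [exact: uniq_flatten_eq U rQ r'Q ar ar'
                             | exact: uniq_flatten_eq U rQ r'Q br br'].
by split=> //; apply: index_adjacent Er'; exact: uniq_flatten_mem U r'Q.
Qed.

Lemma path_succ_fun Q a b b' : path_cover g Q -> path_succ Q a b -> path_succ Q a b' -> b = b'.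
Proof.
move=> C ab ab'; have [r rQ [r1 [r2 Er]]] := ab.
have ar : a \in r by rewrite Er mem_cat inE eqxx orbT.
have [_ br ib] := path_succ_index C ab rQ (or_introl ar).
have [_ b'r ib'] := path_succ_index C ab' rQ (or_introl ar).
by apply: (index_inj a br b'r); rewrite ib ib'.
Qed.

Lemma path_succ_asym Q a b : path_cover g Q -> path_succ Q a b -> ~ path_succ Q b a.
Proof.
move=> C ab ba; have [r rQ [r1 [r2 Er]]] := ab.
have ar : a \in r by rewrite Er mem_cat inE eqxx orbT.
have [_ _ ib] := path_succ_index C ab rQ (or_introl ar).
have [_ _ ia] := path_succ_index C ba rQ (or_intror ar).
by move: ia; rewrite ib => /eqP; rewrite ltn_eqF ?leqnSn.
Qed.

Lemma path_end_of_not_interior Q r x : r \in Q -> x \in r ->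
  ~~ interior_vertex Q x -> path_end r x.
Proof.
move=> rQ xr; apply: contraR; rewrite /path_end xr negb_or => ends.
by apply/hasP; exists r; rewrite // xr.
Qed.

End PathCovers.

Section Acyclic.
Variables (V : finType) (g : rel V).
Hypotheses (gsym : symmetric g) (girr : irreflexive g) (acyc : ~ has_cycle g).

Lemma acyclic_walk_uniq b a w z : uniq (b :: a :: w) -> path g b (a :: w) ->
  g b z -> z != a -> uniq (z :: b :: a :: w).
Proof.
move=> U bw bz za; rewrite cons_uniq U andbT; apply/negP => zin.
have zb : z != b by apply: contraTneq bz => ->; rewrite girr.
move: zin; rewrite !inE (negbTE zb) (negbTE za) /= => zw.
case/splitPr: zw U bw => w1 w2 U bw.
apply: acyc; exists b, (a :: rcons w1 z); split.
- by rewrite /= size_rcons.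
- by move: U; rewrite -cat_rcons -!cat_cons cat_uniq => /andP [].
- by move: bw; rewrite -cat_rcons -cat_cons cat_path => /andP [].
- by rewrite /= last_rcons gsym.
Qed.

Lemma acyclic_no_endless_walk (E : V -> V -> Prop) :
  (forall a b, E a b -> g a b) ->
  (forall a b, E a b -> exists z, [/\ g b z, z != a & E b z]) ->
  forall a b, E a b -> False.
Proof.
move=> Eg Eext a0 b0 E0.
have walk n : exists b a w, [/\ E a b, uniq (b :: a :: w), path g b (a :: w) & size w = n].
  elim: n => [|n [b [a [w [Eab U bw <-]]]]].
    have ab0 := Eg _ _ E0.
    exists b0, a0, [::]; split; rewrite //= andbT.
    + by rewrite inE; apply: contraTneq ab0 => ->; rewrite girr.
    + by rewrite gsym.
  have [z [bz za Ebz]] := Eext _ _ Eab.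
  exists z, b, (a :: w); split=> //; first exact: acyclic_walk_uniq.
  by rewrite /= gsym bz.
have [b [a [w [_ U _ sw]]]] := walk #|V|.
by have := max_card (mem (b :: a :: w)); rewrite (card_uniqP U) /= sw ltnNge leqnSn.
Qed.

Lemma acyclic_deg2_set0 (U : {set V}) :
  (forall v a, v \in U -> exists z, [/\ g v z, z != a & z \in U]) -> U = set0.
Proof.
move=> Udeg; apply/setP => v; rewrite inE; apply/negP => vU.
have [z [vz _ zU]] := Udeg v v vU.
apply: (@acyclic_no_endless_walk (fun a b => [/\ g a b, a \in U & b \in U]) _ _ v z).
- by move=> a b [].
- by move=> a b [_ _ bU]; have [z' [bz' z'a z'U]] := Udeg b a bU; exists z'.
- by split.
Qed.

End Acyclic.

Section ExtensiveIteration.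
Variables (T : finType) (f : {set T} -> {set T}).
Hypothesis fext : forall X : {set T}, X \subset f X.

Lemma iter_extensive_sub k (X : {set T}) : X \subset iter k f X.
Proof. by elim: k => //= k IH; apply: subset_trans IH (fext _). Qed.

Lemma iter_extensive_fix (X : {set T}) : f (iter #|T| f X) = iter #|T| f X.
Proof.
have grow k : f (iter k f X) = iter k f X \/ k <= #|iter k f X|.
  elim: k => [|k [IH|IH]]; [by right | by left; rewrite /= !IH |].
  have [fix_k|grow_k] := eqVneq (f (iter k f X)) (iter k f X).
    by left; rewrite /= !fix_k.
  right; apply: leq_ltn_trans IH (proper_card _).
  by rewrite properEneq eq_sym grow_k fext.
have [//|full] := grow #|T|.
have -> : iter #|T| f X = setT by apply/eqP; rewrite eqEcard subsetT cardsT.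
by apply/eqP; rewrite eqEsubset subsetT fext.
Qed.

End ExtensiveIteration.

Section ZeroForcing.
Variables (V : finType) (g : rel V).
Implicit Types (A S : {set V}) (Q : seq (seq V)).

Lemma zf_closure_sub S : S \subset zf_closure g S.
Proof. by apply: iter_extensive_sub => B; exact: subsetUl. Qed.

Lemma zf_closure_out_neq S u a : u \in zf_closure g S -> g u a -> a \notin zf_closure g S ->
  exists z, [/\ g u z, z \notin zf_closure g S & z != a].
Proof.
set C := zf_closure g S => uC ua aC.
have [z /and3P [uz zC za]|none] := pickP [pred z | [&& g u z, z \notin C & z != a]].
  by exists z.
suff : a \in zf_step g C.
  by rewrite /C /zf_closure iter_extensive_fix ?(negbTE aC) // => B; exact: subsetUl.
rewrite !inE; apply/orP; right; apply/exists_inP; exists u; rewrite // ua /=.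
apply/eqP/setP => z; rewrite !inE; have := none z; rewrite /=.
by case: (z =P a) => [->|_]; rewrite ?ua ?aC ?andbT //; case: (g u z); case: (z \in C).
Qed.

Section ForestHeads.
Hypotheses (gsym : symmetric g) (girr : irreflexive g) (acyc : ~ has_cycle g).

Lemma heads_zero_forcing Q : path_cover g Q -> zero_forcing_set g (heads Q).
Proof.
move=> C; set Cl := zf_closure g (heads Q).
have headsCl : heads Q \subset Cl := zf_closure_sub _.
apply/setP => v; rewrite inE; apply: contraT => vCl; exfalso.
(* A step [E a b] either enters [Cl] by going backwards along a path, or stays outside
   [Cl] without following a path; every such step extends to another one. *)
pose E a b :=
  g a b /\ if b \in Cl then a \notin Cl /\ path_succ Q b a else ~ path_succ Q a b.
have Eext a b : E a b -> exists z, [/\ g b z, z != a & E b z].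
  case=> ab; case: ifP => bCl.
    case=> aCl ba; have [z [bz zCl za]] := zf_closure_out_neq bCl (path_succ_edge C ba) aCl.
    exists z; split; rewrite /E // (negbTE zCl); split=> // bz'.
    by case/eqP: za; apply: (path_succ_fun C bz' ba).
  move=> Nab; have [r rQ br] := path_cover_mem b C.
  have bhead : b != head b r.
    apply: contraFneq bCl => bh; apply: (subsetP headsCl); move: rQ; rewrite {}bh.
    by case: r br => // x t _ /mem_heads.
  have [r1 [c [r2 Er]]] := split_prev br bhead.
  have cb : path_succ Q c b by exists r => //; exists r1, r2.
  exists c; split; first by rewrite gsym (path_succ_edge C cb).
    by apply/eqP => ca; apply: Nab; rewrite -ca.
  split; first by rewrite gsym (path_succ_edge C cb).
  by case: ifP => _; [rewrite bCl | exact: path_succ_asym C cb].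
have [r rQ vr] := path_cover_mem v C.
case: r rQ vr (path_cover_neq0 C rQ) => [|x t] // rQ vr _.
have xCl : x \in Cl by apply: (subsetP headsCl); exact: mem_heads rQ.
have vt : v \in t.
  by move: vr; rewrite inE => /predU1P [vx|//]; move: vCl; rewrite vx xCl.
have [|r1 [b [a [r2 [Er bCl aCl]]]]] := @split_exit _ (fun z => z \in Cl) x t xCl.
  by apply/allPn; exists v.
have ba : path_succ Q b a by exists (x :: t) => //; exists r1, r2.
have Eab : E a b by split; [rewrite gsym (path_succ_edge C ba) | rewrite bCl].
exact: (acyclic_no_endless_walk gsym girr acyc (fun a b (e : E a b) => e.1) Eext Eab).
Qed.

End ForestHeads.

End ZeroForcing.

Section ForcingChains.
Variables (V : finType) (g : rel V).
Implicit Types (A S : {set V}) (Q : seq (seq V)).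

(* [Q] lists the forcing chains that activated [A]: a vertex that is not the last of
   its chain has already forced, so all its neighbours are active. *)
Definition forcing_chains A Q :=
  [/\ all (graph_path g) Q, uniq (flatten Q), flatten Q =i A
    & forall r u, r \in Q -> u \in r -> u != last u r -> nbhd g u \subset A].

Lemma forcing_chains_force A Q u v : forcing_chains A Q ->
  u \in A -> v \notin A -> g u v -> nbhd g u \subset v |: A ->
  exists Q', forcing_chains (v |: A) Q' /\ size Q' = size Q.
Proof.
move=> [Qpath QU QA Qsat] uA vA uv Nu.
have [r rQ ur] : exists2 r, r \in Q & u \in r by apply/flattenP; rewrite QA.
have ulast : u = last u r.
  apply/eqP; apply: contraNT vA => /(Qsat r u rQ ur) /subsetP; apply.
  by rewrite inE.
have vr : v \notin r by apply: contra vA => vr; rewrite -QA; apply/flattenP; exists r.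
case/lastP: r ulast rQ ur vr => [//|r0 z]; rewrite last_rcons => <- {z} rQ ur vr.
case/splitPr: rQ Qpath QU QA Qsat => Q1 Q2 Qpath QU QA Qsat.
set r := rcons r0 u.
have Qperm : perm_eq (flatten (Q1 ++ rcons r v :: Q2)) (v :: flatten (Q1 ++ r :: Q2)).
  by rewrite !flatten_cat /= cat_rcons catA -cat1s perm_catCA /= -catA.
exists (Q1 ++ rcons r v :: Q2); split; last by rewrite !size_cat.
split.
- move: Qpath; rewrite !all_cat /= => /and3P [-> rpath ->]; rewrite andbT /=.
  move: rpath; rewrite !graph_pathE => /and3P [_ rsort runiq].
  by rewrite rcons_uniq vr runiq -size_eq0 size_rcons sorted_rcons2 rsort uv.
- by rewrite (perm_uniq Qperm) /= QU andbT QA.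
- by move=> w; rewrite (perm_mem Qperm) !inE QA.
have Qsat' r' u' : r' \in Q1 ++ r :: Q2 -> u' \in r' -> u' != last u' r' ->
    nbhd g u' \subset v |: A.
  by move=> r'Q u'r' u'last; apply: subset_trans (Qsat _ _ r'Q u'r' u'last) (subsetU1 _ _).
move=> r' u'; rewrite mem_cat inE => /or3P [r'Q1|/eqP->|r'Q2].
- by apply: Qsat'; rewrite mem_cat r'Q1.
- rewrite last_rcons mem_rcons inE => /predU1P [->|u'r]; first by rewrite eqxx.
  move=> _; have [->|u'u] := eqVneq u' u; first exact: Nu.
  apply: (Qsat' _ _ _ u'r); first by rewrite mem_cat mem_head orbT.
  by move: u'r; rewrite /r mem_rcons last_rcons inE (negbTE u'u).
- by apply: Qsat'; rewrite mem_cat inE r'Q2 !orbT.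
Qed.

Lemma forcing_chains_step A Q : forcing_chains A Q ->
  exists Q', forcing_chains (zf_step g A) Q' /\ size Q' = size Q.
Proof.
rewrite /zf_step; set F := [set v | _]; rewrite -[F in A :|: F]set_enum.
have forced l A' Q0 : {subset l <= F} -> A \subset A' -> forcing_chains A' Q0 ->
    exists Q', forcing_chains (A' :|: [set:: l]) Q' /\ size Q' = size Q0.
  elim: l A' Q0 => [|v l IH] A' Q0 lF AA' chains.
    by exists Q0; rewrite setU0.
  have lF' : {subset l <= F} by move=> w wl; apply: lF; rewrite inE wl orbT.
  rewrite set_cons setUCA setUA.
  have [vA'|vA'] := boolP (v \in A').
    have -> : v |: A' = A' by apply/setUidPr; rewrite sub1set.
    exact: IH.
  have := lF v (mem_head _ _); rewrite inE => /exists_inP [u uA /andP [uv /eqP Nu]].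
  have Nu' : nbhd g u \subset v |: A'.
    apply/subsetP => z zN; rewrite !inE; have [zA|zA] := boolP (z \in A).
      by rewrite (subsetP AA' z zA) orbT.
    have : z \in nbhd g u :\: A by rewrite inE zA zN.
    by rewrite Nu inE => ->.
  have [Q1 [chains1 <-]] := forcing_chains_force chains (subsetP AA' u uA) vA' uv Nu'.
  by apply: IH => //; apply: subset_trans AA' (subsetU1 _ _).
by move=> chains; apply: forced => // v; rewrite mem_enum.
Qed.

Lemma zero_forcing_path_cover S : zero_forcing_set g S ->
  exists Q, path_cover g Q /\ size Q = #|S|.
Proof.
move=> ZF; pose Q0 := [seq [:: s] | s <- enum S].
have chains0 : forcing_chains S Q0.
  split; rewrite ?flatten_seq1 ?enum_uniq //.
  - by rewrite all_map; apply/allP.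
  - exact: mem_enum.
  - by move=> r u /mapP [s _ ->]; rewrite inE => /eqP ->; rewrite eqxx.
have chains k : exists Q, forcing_chains (iter k (zf_step g) S) Q /\ size Q = #|S|.
  elim: k => [|k [Q [chains <-]]]; first by exists Q0; rewrite size_map cardE.
  exact: forcing_chains_step.
have [Q [[Qpath QU QV _] SQ]] := chains #|V|.
exists Q; split=> //; split=> //; apply: uniq_perm; rewrite ?enum_uniq // => v.
by rewrite QV; move: ZF; rewrite /zero_forcing_set /zf_closure => ->; rewrite inE mem_enum.
Qed.

End ForcingChains.

Section MinPathCovers.
Variables (V : finType) (g : rel V).
Implicit Types (Q : seq (seq V)) (r s : seq V).

Lemma min_path_cover_size Q Q' : min_path_cover g Q -> path_cover g Q' ->
  size Q' = size Q -> min_path_cover g Q'.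
Proof. by move=> [_ Qmin] C' eqQ'; split=> // Q'' /Qmin; rewrite eqQ'. Qed.

Lemma min_path_cover_heads Q : symmetric g -> irreflexive g -> ~ has_cycle g ->
  min_path_cover g Q -> min_zero_forcing_set g (heads Q).
Proof.
move=> gsym girr acyc [C Qmin]; split; first exact: heads_zero_forcing.
move=> S /zero_forcing_path_cover [Q' [C' <-]].
by rewrite (card_heads C); exact: Qmin.
Qed.

Definition nonleaf v := 1 < #|nbhd g v|.

Lemma nonleaf_nbhd_neq v a : nonleaf v -> exists z, g v z && (z != a).
Proof.
move=> nv; have : ~~ (nbhd g v \subset [set a]).
  by apply: contraL nv => /subset_leq_card; rewrite cards1 -ltnNge.
by case/subsetPn => z; rewrite !inE => vz za; exists z; rewrite vz.
Qed.

Lemma two_nbhd_nonleaf v a b : g v a -> g v b -> a != b -> nonleaf v.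
Proof.
move=> va vb ab; apply: leq_trans (subset_leq_card (_ : [set a; b] \subset _)).
  by rewrite cards2 ab.
by apply/subsetP => z; rewrite !inE => /orP [] /eqP ->.
Qed.

Lemma automorphism_nonleaf phi v : automorphism g phi -> nonleaf (phi v) = nonleaf v.
Proof.
move=> phiA; rewrite /nonleaf; have -> : nbhd g (phi v) = phi @: nbhd g v.
  apply/setP => z; rewrite -[z](permKV phi) (mem_imset _ _ (@perm_inj _ phi)) !inE.
  by rewrite phiA.
by rewrite card_imset //; exact: perm_inj.
Qed.

Lemma sum_nonleaf_automorphism phi (A : {set V}) : automorphism g phi ->
  \sum_(v in phi @: A) nonleaf v = \sum_(v in A) nonleaf v.
Proof.
move=> phiA; rewrite big_imset /=; last by move=> x y _ _; exact: perm_inj.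
by apply: eq_bigr => v _; rewrite automorphism_nonleaf.
Qed.

Lemma path_end_nonleaf r x y : symmetric g -> graph_path g r ->
  path_end r x -> r != [:: x] -> y \notin r -> g x y -> nonleaf x.
Proof.
move=> gsym; rewrite graph_pathE => /and3P [_ rs _] /path_end_traversal [[|c t] rxt].
  by case: rxt => [->|E]; rewrite ?eqxx // -[r]revK -E eqxx.
move=> _ yr xy; apply: (two_nbhd_nonleaf _ xy (_ : c != y)).
  by have /= /andP [] := traversal_sorted gsym rs rxt.
by apply: contraNneq yr => <-; rewrite -(perm_mem (traversal_perm rxt)) !inE eqxx orbT.
Qed.

End MinPathCovers.

Section IsoUniqueForest.
Variables (V : finType) (g : rel V).
Hypotheses (gsym : symmetric g) (girr : irreflexive g) (acyc : ~ has_cycle g).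
Hypothesis iso : iso_unique_zf g.
Implicit Types (Q : seq (seq V)) (r s : seq V).

Lemma path_cover_replace Q r s : path_cover g Q -> r \in Q -> s != [::] -> sorted g s ->
  perm_eq s r -> path_cover g (s :: rem r Q).
Proof.
move=> C rQ s0 ss sr; have C' := path_cover_perm (perm_to_rem rQ) C.
apply: (path_cover_rearrange C'); last by rewrite /= perm_cat2r.
move=> r'; rewrite inE => /predU1P [->|r'Q]; first by rewrite s0.
by apply: (path_cover_neq0_sorted C'); rewrite inE r'Q orbT.
Qed.

Lemma nonleaf_traversal Q r u t : min_path_cover g Q -> r \in Q -> traversal r (u :: t) ->
  nonleaf g u = nonleaf g (last u t).
Proof.
move=> Qmin rQ rut; have C := Qmin.1.
have sut : sorted g (u :: t) := traversal_sorted gsym (path_cover_sorted C rQ) rut.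
have cover s : perm_eq s (u :: t) -> sorted g s -> s != [::] ->
    min_path_cover g (s :: rem r Q).
  move=> sp ss s0; apply: min_path_cover_size Qmin _ _; last first.
    by rewrite (perm_size (perm_to_rem rQ)).
  by apply: path_cover_replace; rewrite // (perm_trans sp) ?traversal_perm.
have M1 := cover (u :: t) (perm_refl _) sut isT.
case/lastP: t rut sut M1 cover => [//|t z] rut sut M1 cover; rewrite last_rcons.
have M2 : min_path_cover g ((z :: rev (u :: t)) :: rem r Q).
  rewrite -rev_rcons rcons_cons; apply: cover.
  - by rewrite perm_rev.
  - by rewrite sorted_rev_sym.
  - by rewrite -size_eq0 size_rev.
(* the two head sets differ only in [u] versus [z] *)
have [phi [phiA phiH]] := iso (min_path_cover_heads gsym girr acyc M1)
                              (min_path_cover_heads gsym girr acyc M2).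
have out w : w \in u :: rcons t z -> w \notin heads (rem r Q).
  have : uniq ((u :: rcons t z) ++ flatten (rem r Q)) := path_cover_uniq M1.1.
  rewrite cat_uniq => /and3P [_ D _] wr.
  by apply: contra D => /mem_heads_flatten wQ; apply/hasP; exists w.
move: (sum_nonleaf_automorphism (heads ((u :: rcons t z) :: rem r Q)) phiA).
rewrite phiH !heads_cons !big_setU1 ?out ?(mem_head, inE, mem_rcons, orbT) //=.
by move/addIn; case: (nonleaf g u); case: (nonleaf g z).
Qed.

Lemma min_path_cover_ends_nonadjacent Q r s u w : min_path_cover g Q ->
  r \in Q -> s \in Q -> r != s -> path_end r u -> path_end s w -> ~~ g u w.
Proof.
move=> Qmin rQ sQ rs /path_end_traversal [t rut] /path_end_traversal [t' swt'].
apply/negP => uw; set Q0 := rem s (rem r Q).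
have QQ0 := perm_to_rem2 rQ sQ rs; have C := path_cover_perm QQ0 Qmin.1.
have sC : s \in [:: r, s & Q0] by rewrite !inE eqxx orbT.
have sut := traversal_sorted gsym (path_cover_sorted C (mem_head _ _)) rut.
have swt := traversal_sorted gsym (path_cover_sorted C sC) swt'.
have C' : path_cover g ((rev (u :: t) ++ w :: t') :: Q0).
  apply: (path_cover_rearrange C).
    move=> r'; rewrite inE => /predU1P [->|r'Q0]; last first.
      by apply: (path_cover_neq0_sorted C); rewrite !inE r'Q0 !orbT.
    rewrite -size_eq0 size_cat /= addnS sorted_cat_cons -rev_cons sorted_rev_sym //=.
    by rewrite gsym uw; apply/andP.
  rewrite /= -catA; apply: perm_cat; first by rewrite perm_rev; exact: traversal_perm.
  exact: perm_cat (traversal_perm swt') (perm_refl _).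
by have := Qmin.2 _ C'; rewrite (perm_size QQ0) /= ltnn.
Qed.

Lemma nonleaf_reroute Q r s u t w : min_path_cover g Q -> r \in Q -> s \in Q -> r != s ->
  traversal r (u :: t) -> w \in s -> ~~ path_end s w -> g w u ->
  nonleaf g (head w s) = nonleaf g u.
Proof.
move=> Qmin rQ sQ rs rut ws; rewrite /path_end ws negb_or => /andP [wh wl] wu.
case/splitPr: ws wh wl sQ rs => -[|y s1] s2; rewrite ?eqxx //= => _.
rewrite last_cat /=; case: s2 => [|x s2]; rewrite ?eqxx // => _ sQ rs.
have QQ0 := perm_to_rem2 rQ sQ rs; set Q0 := rem _ (rem r Q) in QQ0.
have C := path_cover_perm QQ0 Qmin.1.
have sut := traversal_sorted gsym (path_cover_sorted C (mem_head _ _)) rut.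
have ss : sorted g (y :: s1 ++ [:: w, x & s2]).
  by apply: (path_cover_sorted C); rewrite !inE eqxx orbT.
(* cut [s] just after [w] and continue its first part with [u :: t] *)
set N := y :: s1 ++ w :: u :: t.
have C' : path_cover g [:: N, x :: s2 & Q0].
  apply: (path_cover_rearrange C).
    move=> r'; rewrite !inE => /or3P [/eqP->|/eqP->|r'Q0].
    - by move: ss; rewrite /N /= !cat_path /= wu => /and3P [-> -> _].
    - by move: ss; rewrite /= cat_path /= => /and3P [_ _ /andP [_ ->]].
    - by apply: (path_cover_neq0_sorted C); rewrite !inE r'Q0 !orbT.
  have -> : flatten [:: N, x :: s2 & Q0] =
            (rcons (y :: s1) w ++ u :: t) ++ x :: s2 ++ flatten Q0 by rewrite cat_rcons.
  have -> : flatten [:: r, y :: s1 ++ [:: w, x & s2] & Q0] =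
            r ++ (rcons (y :: s1) w ++ x :: s2) ++ flatten Q0 by rewrite cat_rcons.
  rewrite -!catA perm_catCA; exact: perm_cat (traversal_perm rut) (perm_refl _).
have M' := min_path_cover_size Qmin C' (esym (perm_size QQ0)).
rewrite (nonleaf_traversal M' (mem_head _ _) (or_introl erefl)) /N last_cat /=.
by rewrite -(nonleaf_traversal Qmin rQ rut).
Qed.

Lemma nonleaf_path_end Q r u : min_path_cover g Q -> r \in Q -> path_end r u ->
  nonleaf g u = nonleaf g (head u r).
Proof.
case: r => [//|x t] Qmin rQ /andP [_ /orP [/eqP ->|/eqP ->]] //=.
by rewrite (nonleaf_traversal Qmin rQ (or_introl erefl)).
Qed.

Definition nonleaf_path_vertices Q : {set V} :=
  [set v | has (fun r => (v \in r) && nonleaf g (head v r)) Q].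

Lemma nonleaf_path_vertices_deg2 Q v a : min_path_cover g Q ->
  v \in nonleaf_path_vertices Q ->
  exists z, [/\ g v z, z != a & z \in nonleaf_path_vertices Q].
Proof.
move=> Qmin; rewrite inE => /hasP [[//|x t] rQ /andP [vr /= nx]]; have C := Qmin.1.
have inU z : z \in x :: t -> z \in nonleaf_path_vertices Q.
  by move=> zr; rewrite inE; apply/hasP; exists (x :: t); rewrite ?zr.
have [vend|vint] := boolP (path_end (x :: t) v).
  have nv : nonleaf g v by rewrite (nonleaf_path_end Qmin rQ vend).
  have [z /andP [vz za]] := nonleaf_nbhd_neq a nv.
  (* ends are not adjacent, so [z] is interior to its path, which rerouting
     shows to have non-leaf ends as well *)
  exists z; split=> //; have [s sQ zs] := path_cover_mem z C.
  have [xts|rs] := eqVneq (x :: t) s; first by apply: inU; rewrite xts.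
  have [zend|zint] := boolP (path_end s z).
    by case/negP: (min_path_cover_ends_nonadjacent Qmin rQ sQ rs vend zend).
  have [tv rvt] := path_end_traversal vend.
  rewrite inE; apply/hasP; exists s; rewrite // zs.
  by rewrite (nonleaf_reroute Qmin rQ sQ rs rvt zs zint) // gsym.
move: vint; rewrite /path_end vr negb_or => /andP [vh vl].
have [r1 [c [d [r2 Er]]]] := split_interior vr vh vl.
have := path_cover_path C rQ; rewrite graph_pathE Er => /and3P [_].
rewrite sorted_cat_cons /= => /and3P [_ cv /andP [vd _]].
rewrite cat_uniq /= => /and3P [_ _ /andP [cN _]].
have cd : c != d by apply: contraNneq cN => ->; rewrite !inE eqxx orbT.
have [ca|ca] := eqVneq c a.
  by exists d; split; rewrite // ?inU ?Er ?(mem_cat, inE, eqxx, orbT) // -ca eq_sym.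
by exists c; split; rewrite // ?inU ?Er ?(mem_cat, inE, eqxx, orbT) // gsym.
Qed.

Lemma min_path_cover_end_leaf Q r u : min_path_cover g Q -> r \in Q -> path_end r u ->
  ~~ nonleaf g u.
Proof.
move=> Qmin rQ ru; rewrite (nonleaf_path_end Qmin rQ ru); apply/negP => nu.
have U0 := acyclic_deg2_set0 gsym girr acyc
  (fun v a => @nonleaf_path_vertices_deg2 Q v a Qmin).
have : u \in nonleaf_path_vertices Q.
  by rewrite inE; apply/hasP; exists r; rewrite // nu; case/andP: ru => ->.
by rewrite U0 inE.
Qed.

Lemma min_path_cover_end_singleton Q r u w : min_path_cover g Q -> r \in Q ->
  path_end r u -> w \notin r -> g u w -> r = [:: u].
Proof.
move=> Qmin rQ ru wr uw; apply/eqP; move: (min_path_cover_end_leaf Qmin rQ ru).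
apply: contraNT => ru1.
exact: path_end_nonleaf gsym (path_cover_path Qmin.1 rQ) ru ru1 wr uw.
Qed.

End IsoUniqueForest.

Theorem lemma3p7 (V : finType) (g : rel V) (P : seq (seq V)) (x y : V) :
  is_tree g -> iso_unique_zf g -> min_path_cover g P ->
  connector_edge g P x y ->
  (interior_vertex P x && interior_vertex P y)
  || (interior_vertex P x && singleton_path P y)
  || (interior_vertex P y && singleton_path P x).
Proof.
move=> [[gsym girr] _ acyc] iso Pmin /andP [xy Nxy]; have C := Pmin.1.
have [p pP xp] := path_cover_mem x C; have [q qP yq] := path_cover_mem y C.
have yp : y \notin p by apply: contra Nxy => yp; apply/hasP; exists p; rewrite ?xp.
have xq : x \notin q by apply: contra Nxy => xq; apply/hasP; exists q; rewrite ?xq.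
have pq : p != q by apply: contraNneq yp => ->.
have endx := path_end_of_not_interior pP xp; have endy := path_end_of_not_interior qP yq.
have single := min_path_cover_end_singleton gsym girr acyc iso Pmin.
have Ix : interior_vertex P x || singleton_path P x.
  case: (boolP (interior_vertex P x)) => // /endx xend.
  by rewrite /singleton_path -(single _ _ _ pP xend yp xy).
have Iy : interior_vertex P y || singleton_path P y.
  case: (boolP (interior_vertex P y)) => // /endy yend.
  by rewrite /singleton_path -(single _ _ _ qP yend xq) // gsym.
have Ixy : interior_vertex P x || interior_vertex P y.
  move: xy; apply: contraLR; rewrite negb_or => /andP [/endx xend /endy yend].
  exact: (min_path_cover_ends_nonadjacent gsym Pmin pP qP pq xend yend).
by move: Ix Iy Ixy; case: (interior_vertex P x); case: (interior_vertex P y);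
  case: (singleton_path P x); case: (singleton_path P y).
Qed.
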